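(* Let $b>0$, $\rho\in(\frac14,\frac12)$ and $h\in(0,1)$. If $m\in\mathbb Z$ satisfies $|m|>(1+\sqrt2)b/2$, then \[ \lambda_1\bigl(\mathcal H^{b,\rho}_{m,h}\bigr)>\inf_{\ell\in\mathbb Z}\lambda_1\bigl(\mathcal H^{b,\rho}_{\ell,h}\bigr). \]
   Context: Let $\delta=h^{\rho-\frac12}$. For $m\in\mathbb Z$, $\mathcal H^{b,\rho}_{m,h}$ is the self-adjoint operator in the weighted space $L^2((0,\delta);(1-h^{1/2}\tau)d\tau)$ associated with the quadratic form \[ v\mapsto\int_0^\delta\Bigl(|v'(\tau)|^2+\frac{h}{(1-h^{1/2}\tau)^2}\Bigl(m-\frac b2(1-h^{1/2}\tau)^2\Bigr)^2|v(\tau)|^2\Bigr)(1-h^{1/2}\tau)\,d\tau-|v(0)|^2 \] on $\{v\in H^1((0,\delta)):v(\delta)=0\}$ (boundary conditions $v'(0)=-v(0)$, $v(\delta)=0$). $\lambda_1(\cdot)$ denotes the lowest eigenvalue. *)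

From Stdlib Require Import Reals Lra ZArith.
Open Scope R_scope.

Definition delta (rho h : R) : R := Rpower h (rho - 1/2).

Definition wgt (h tau : R) : R := 1 - sqrt h * tau.

Definition pot (b h : R) (m : Z) (tau : R) : R :=
  h / (wgt h tau)^2 * (IZR m - b/2 * (wgt h tau)^2)^2.

(* lam is an eigenvalue of H^{b,rho}_{m,h}: there is a nonzero (real) C^2
   eigenfunction v on [0,delta] solving
     -(1/w)(w v')' + pot v = lam v,   v'(0) = - v(0),   v(delta) = 0.
   Note (w v')' = w v'' - sqrt h v' since w' = - sqrt h. *)
Definition is_eigenvalue (b rho h : R) (m : Z) (lam : R) : Prop :=
  exists v v1 v2 : R -> R,
    (forall t, 0 <= t <= delta rho h ->
       derivable_pt_lim v t (v1 t) /\ derivable_pt_lim v1 t (v2 t) /\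
       - (wgt h t * v2 t - sqrt h * v1 t) / wgt h t + pot b h m t * v t
         = lam * v t) /\
    v1 0 = - v 0 /\
    v (delta rho h) = 0 /\
    (exists t, 0 <= t <= delta rho h /\ v t <> 0).

Definition is_lambda1 (b rho h : R) (m : Z) (lam : R) : Prop :=
  is_eigenvalue b rho h m lam /\
  (forall mu, is_eigenvalue b rho h m mu -> lam <= mu).

Definition is_glb (E : R -> Prop) (g : R) : Prop :=
  (forall x, E x -> g <= x) /\ (forall g', (forall x, E x -> g' <= x) -> g' <= g).

(* Since |m| > (1 + sqrt 2) b / 2 forces m <> 0 and b < 2 |m| - 1, moving m one unit
   towards 0 gives a flux l whose potential is strictly smaller than that of m on [0, delta].

   Writing p = w v', the eigenvalue problem becomes a first-order linear system, solved
   for every energy E from y(0) = 1, p(0) = -1 by summing its Picard series.  An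
   eigenfunction of H_m for lambda_1(H_m) cannot vanish at 0 (its energy y^2 + p^2 would
   vanish identically by Gronwall), so after normalisation it is such a solution vanishing
   at delta.  By Sturm comparison the solution for the smaller potential of l at the same
   energy turns nonpositive inside (0, delta).  It stays positive for very negative
   energies and depends continuously on E, so at the supremum E* of the energies below
   which all solutions stay positive, the solution is nonnegative and vanishes, and only
   at delta since a nonnegative solution has no interior double zero.  Thus E* < lambda_1(H_m)
   is an eigenvalue of H_l, and inf_l lambda_1(H_l) <= lambda_1(H_l) <= E*. *)

From Stdlib Require Import Reals ZArith Lra Lia Psatz Classical Ranalysis5.
From Coquelicot Require Import Coquelicot.
Open Scope R_scope.

Lemma le_of_deriv_nonneg (g g' : R -> R) (a b : R) :
  a <= b -> (forall s, a <= s <= b -> derivable_pt_lim g s (g' s)) ->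
  (forall s, a <= s <= b -> 0 <= g' s) -> g a <= g b.
Proof.
  intros hab hd hpos. destruct (Req_dec a b) as [<- | hne]; [lra |].
  destruct (MVT_cor2 g g' a b) as [c [hc hac]]; [lra | exact hd |].
  assert (0 <= g' c) by (apply hpos; lra). nra.
Qed.

Lemma abs_sub_le_of_deriv_dominated (F f G g : R -> R) (a b : R) :
  a <= b -> (forall s, a <= s <= b -> derivable_pt_lim F s (f s)) ->
  (forall s, a <= s <= b -> derivable_pt_lim G s (g s)) ->
  (forall s, a <= s <= b -> Rabs (f s) <= g s) -> Rabs (F b - F a) <= G b - G a.
Proof.
  intros hab hF hG hfg.
  assert (hminus : G a - F a <= G b - F b).
  { apply (le_of_deriv_nonneg (fun s => G s - F s) (fun s => g s - f s)); [exact hab | |].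
    - intros s hs. apply derivable_pt_lim_minus; auto.
    - intros s hs. pose proof (proj1 (Rabs_le_between _ _) (hfg s hs)). lra. }
  assert (hplus : G a + F a <= G b + F b).
  { apply (le_of_deriv_nonneg (fun s => G s + F s) (fun s => g s + f s)); [exact hab | |].
    - intros s hs. apply derivable_pt_lim_plus; auto.
    - intros s hs. pose proof (proj1 (Rabs_le_between _ _) (hfg s hs)). lra. }
  apply Rabs_le_between. lra.
Qed.

Lemma abs_le_of_deriv_abs_le_pow_nonneg (F f : R -> R) (C : R) (k : nat) :
  F 0 = 0 -> (forall s, derivable_pt_lim F s (f s)) ->
  (forall s, Rabs (f s) <= C * Rabs s ^ k) ->
  forall t, 0 <= t -> Rabs (F t) <= C * t ^ S k / INR (S k).
Proof.
  intros hF0 hF hf t ht.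
  assert (hk : INR (S k) <> 0) by (apply not_0_INR; lia).
  pose proof (abs_sub_le_of_deriv_dominated F f
    (fun s => C / INR (S k) * s ^ S k) (fun s => C * s ^ k) 0 t ht) as H.
  rewrite hF0, Rminus_0_r in H.
  replace (C * t ^ S k / INR (S k)) with (C / INR (S k) * t ^ S k - C / INR (S k) * 0 ^ S k)
    by (simpl; field; exact hk).
  apply H; intros s hs.
  - apply hF.
  - replace (C * s ^ k) with (C / INR (S k) * (INR (S k) * s ^ pred (S k)))
      by (simpl pred; field; exact hk).
    apply (derivable_pt_lim_scal (fun s => s ^ S k)), derivable_pt_lim_pow.
  - rewrite <- (Rabs_right s) at 2 by lra. apply hf.
Qed.

Lemma abs_le_of_deriv_abs_le_pow (F f : R -> R) (C : R) (k : nat) :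
  F 0 = 0 -> (forall s, derivable_pt_lim F s (f s)) ->
  (forall s, Rabs (f s) <= C * Rabs s ^ k) ->
  forall t, Rabs (F t) <= C * Rabs t ^ S k / INR (S k).
Proof.
  intros hF0 hF hf t.
  destruct (Rle_or_lt 0 t) as [ht | ht].
  - rewrite (Rabs_right t) by lra. exact (abs_le_of_deriv_abs_le_pow_nonneg F f C k hF0 hF hf t ht).
  - rewrite (Rabs_left t) by lra.
    assert (hG0 : (fun s => F (- s)) 0 = 0) by (cbv beta; rewrite Ropp_0; exact hF0).
    assert (hG : forall s, derivable_pt_lim (fun s => F (- s)) s (- f (- s))).
    { intros s. replace (- f (- s)) with (f (- s) * -1) by ring.
      apply (derivable_pt_lim_comp (fun s => - s) F).
      - apply (derivable_pt_lim_opp (fun s => s)), derivable_pt_lim_id.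
      - apply hF. }
    assert (hg : forall s, Rabs (- f (- s)) <= C * Rabs s ^ k).
    { intros s. rewrite Rabs_Ropp, <- (Rabs_Ropp s). apply hf. }
    pose proof (abs_le_of_deriv_abs_le_pow_nonneg _ _ C k hG0 hG hg (- t)) as H.
    cbv beta in H. rewrite Ropp_involutive in H. apply H. lra.
Qed.

(** * Linear systems with bounded continuous coefficients *)

Lemma abs_le_pow_fact_succ (F f g : R -> R) (K M : R) (n : nat) :
  F 0 = 0 -> (forall s, derivable_pt_lim F s (f s * g s)) ->
  (forall s, Rabs (f s) <= M) ->
  (forall s, Rabs (g s) <= K * (M * Rabs s) ^ n / INR (fact n)) ->
  forall t, Rabs (F t) <= K * (M * Rabs t) ^ S n / INR (fact (S n)).
Proof.
  intros hF0 hF hf hg t.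
  assert (hM : 0 <= M) by (pose proof (hf 0); pose proof (Rabs_pos (f 0)); lra).
  assert (hfact : INR (fact n) <> 0) by apply INR_fact_neq_0.
  assert (hn : INR (S n) <> 0) by (apply not_0_INR; lia).
  replace (K * (M * Rabs t) ^ S n / INR (fact (S n)))
    with (K * M ^ S n / INR (fact n) * Rabs t ^ S n / INR (S n))
    by (change (fact (S n)) with (S n * fact n)%nat;
        rewrite mult_INR, Rpow_mult_distr; field; split; assumption).
  apply (abs_le_of_deriv_abs_le_pow F (fun s => f s * g s)); [exact hF0 | exact hF |].
  intros s. rewrite Rabs_mult.
  apply (Rle_trans _ (M * (K * (M * Rabs s) ^ n / INR (fact n)))).
  - apply Rmult_le_compat; [apply Rabs_pos | apply Rabs_pos | apply hf | apply hg].
  - right. rewrite Rpow_mult_distr. simpl. field. exact hfact.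
Qed.

Lemma exp_series_abs_cv (K x : R) : 0 <= K -> 0 <= x ->
  Un_cv (fun n => sum_f_R0 (fun k => Rabs (K * x ^ k / INR (fact k))) n) (K * exp x).
Proof.
  intros hK hx.
  apply (Un_cv_ext (fun n => K * sum_f_R0 (fun k => / INR (fact k) * x ^ k) n)).
  - intros n. rewrite scal_sum. apply sum_eq. intros k _.
    rewrite Rabs_right; [field; apply INR_fact_neq_0 |].
    apply Rle_ge, Rmult_le_pos; [apply Rmult_le_pos, pow_le; assumption |].
    apply Rlt_le, Rinv_0_lt_compat, INR_fact_lt_0.
  - apply (CV_mult (fun _ => K)); [intros eps heps; exists 0%nat; intros n _;
      rewrite R_dist_eq; exact heps |].
    exact (proj2_sig (exist_exp x)).
Qed.

Lemma CVN_R_of_exp_bound (fn : nat -> R -> R) (K M : R) : 0 <= K -> 0 <= M ->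
  (forall n t, Rabs (fn n t) <= K * (M * Rabs t) ^ n / INR (fact n)) -> CVN_R fn.
Proof.
  intros hK hM hfn r.
  exists (fun k => K * (M * r) ^ k / INR (fact k)), (K * exp (M * r)). split.
  - apply exp_series_abs_cv; [exact hK | pose proof (cond_pos r); nra].
  - intros n t ht. unfold Boule in ht. rewrite Rminus_0_r in ht.
    eapply Rle_trans; [apply hfn |].
    apply Rmult_le_compat_r; [apply Rlt_le, Rinv_0_lt_compat, INR_fact_lt_0 |].
    apply Rmult_le_compat_l; [exact hK |]. apply pow_incr.
    split; [apply Rmult_le_pos; [exact hM | apply Rabs_pos] |].
    apply Rmult_le_compat_l; lra.
Qed.

Lemma CVU_mult_bounded_l (fn : nat -> R -> R) (f a : R -> R) (M x : R) (r : posreal) :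
  (forall y, Rabs (a y) <= M) -> CVU fn f x r ->
  CVU (fun n y => a y * fn n y) (fun y => a y * f y) x r.
Proof.
  intros ha hcvu eps heps.
  assert (hM : 0 <= M) by (pose proof (ha 0); pose proof (Rabs_pos (a 0)); lra).
  destruct (hcvu (eps / (M + 1))) as [N HN]; [apply Rdiv_lt_0_compat; lra |].
  exists N. intros n y hn hy.
  rewrite <- Rmult_minus_distr_l, Rabs_mult.
  apply (Rle_lt_trans _ ((M + 1) * Rabs (f y - fn n y))).
  - apply Rmult_le_compat_r; [apply Rabs_pos | pose proof (ha y); lra].
  - replace eps with ((M + 1) * (eps / (M + 1))) by (field; lra).
    apply Rmult_lt_compat_l; [lra | apply HN; assumption].
Qed.

Lemma SFL_cv (fn : nat -> R -> R) cv t : Un_cv (fun N => SP fn N t) (SFL fn cv t).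
Proof. unfold SFL. destruct (cv t) as [l hl]. exact hl. Qed.

Lemma SFL_of_vanishing_tail (fn : nat -> R -> R) cv t :
  (forall n, fn (S n) t = 0) -> SFL fn cv t = fn O t.
Proof.
  intros h0. apply (UL_sequence (fun N => SP fn N t)); [apply SFL_cv |].
  apply (Un_cv_ext (fun _ => fn O t)).
  - intros n. induction n as [| n IH]; [reflexivity |].
    unfold SP in *. simpl. rewrite <- IH, h0. ring.
  - intros eps heps. exists 0%nat. intros n _. rewrite R_dist_eq. exact heps.
Qed.

Lemma derivable_pt_lim_SFL (u q : nat -> R -> R) (a : R -> R) (M : R)
    (Nu : CVN_R u) (Nq : CVN_R q) :
  continuity a -> (forall t, Rabs (a t) <= M) -> (forall n, continuity (q n)) ->
  (forall t, derivable_pt_lim (u O) t 0) ->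
  (forall n t, derivable_pt_lim (u (S n)) t (a t * q n t)) ->
  forall t, derivable_pt_lim (SFL u (CVN_R_CVS u Nu)) t (a t * SFL q (CVN_R_CVS q Nq) t).
Proof.
  intros ha haM hq hu0 hu t.
  assert (hpartial : forall n y, derivable_pt_lim (SP u (S n)) y (a y * SP q n y)).
  { intros n y. induction n as [| n IH].
    - replace (a y * SP q 0 y) with (0 + a y * q O y) by (unfold SP; simpl; ring).
      apply (derivable_pt_lim_plus (u O) (u 1%nat)); auto.
    - replace (a y * SP q (S n) y) with (a y * SP q n y + a y * q (S n) y)
        by (unfold SP; simpl; ring).
      apply (derivable_pt_lim_plus (SP u (S n)) (u (S (S n)))); auto. }
  assert (hr : 0 < Rabs t + 1) by (pose proof (Rabs_pos t); lra).
  set (r := mkposreal _ hr).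
  apply (derivable_pt_lim_CVU (fun n => SP u (S n)) (fun n y => a y * SP q n y)
    (SFL u (CVN_R_CVS u Nu)) (fun y => a y * SFL q (CVN_R_CVS q Nq) y) t 0 r).
  - unfold Boule. rewrite Rminus_0_r. simpl. lra.
  - intros y n _. apply hpartial.
  - intros y _. apply (Un_cv_ext (fun n => SP u (n + 1) y)).
    + intros n. rewrite Nat.add_1_r. reflexivity.
    + apply CV_shift', SFL_cv.
  - apply (CVU_mult_bounded_l _ _ a M); [exact haM | apply CVN_CVU, Nq].
  - intros y hy. apply continuity_pt_mult; [apply ha |].
    apply (SFL_continuity_pt _ _ r (Nq r)); [| exact hy].
    intros n z _. apply hq.
Qed.

Lemma derivable_pt_lim_RInt_0 (f : R -> R) : continuity f ->
  forall t, derivable_pt_lim (fun t => RInt f 0 t) t (f t).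
Proof.
  intros hf t. apply is_derive_Reals, (is_derive_RInt f _ 0 t).
  - apply filter_forall. intros x.
    apply (RInt_correct (V := R_CompleteNormedModule)),
      (ex_RInt_continuous (V := R_CompleteNormedModule)).
    intros z _. apply continuity_pt_filterlim, hf.
  - apply continuity_pt_filterlim, hf.
Qed.

Section LinearSystem.

Variables (a c : R -> R) (M y0 p0 : R).
Hypotheses (ha : continuity a) (hc : continuity c)
  (haM : forall t, Rabs (a t) <= M) (hcM : forall t, Rabs (c t) <= M).

Fixpoint picard_terms (n : nat) : (R -> R) * (R -> R) :=
  match n with
  | O => (fun _ => y0, fun _ => p0)
  | S k => (fun t => RInt (fun s => a s * snd (picard_terms k) s) 0 t,
            fun t => RInt (fun s => c s * fst (picard_terms k) s) 0 t)
  end.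

Definition picard_y (n : nat) : R -> R := fst (picard_terms n).
Definition picard_p (n : nat) : R -> R := snd (picard_terms n).

Lemma picard_terms_continuous n : continuity (picard_y n) /\ continuity (picard_p n).
Proof.
  induction n as [| n [IHy IHp]].
  - split; apply continuity_const; intros x x'; reflexivity.
  - split; intros t; apply derivable_continuous_pt.
    + exists (a t * picard_p n t).
      apply (derivable_pt_lim_RInt_0 (fun s => a s * picard_p n s)), continuity_mult; assumption.
    + exists (c t * picard_y n t).
      apply (derivable_pt_lim_RInt_0 (fun s => c s * picard_y n s)), continuity_mult; assumption.
Qed.

Lemma picard_terms_derive n t :
  derivable_pt_lim (picard_y (S n)) t (a t * picard_p n t) /\
  derivable_pt_lim (picard_p (S n)) t (c t * picard_y n t).
Proof.
  destruct (picard_terms_continuous n) as [hy hp]. split.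
  - apply (derivable_pt_lim_RInt_0 (fun s => a s * picard_p n s)), continuity_mult; assumption.
  - apply (derivable_pt_lim_RInt_0 (fun s => c s * picard_y n s)), continuity_mult; assumption.
Qed.

Lemma picard_terms_at_0 n : picard_y (S n) 0 = 0 /\ picard_p (S n) 0 = 0.
Proof.
  unfold picard_y, picard_p. cbn [picard_terms fst snd].
  rewrite !(RInt_point (V := R_CompleteNormedModule)). split; reflexivity.
Qed.

Lemma picard_terms_bound n t :
  Rabs (picard_y n t) <= (Rabs y0 + Rabs p0) * (M * Rabs t) ^ n / INR (fact n) /\
  Rabs (picard_p n t) <= (Rabs y0 + Rabs p0) * (M * Rabs t) ^ n / INR (fact n).
Proof.
  revert t. induction n as [| n IH]; intros t.
  - change ((M * Rabs t) ^ 0 / INR (fact 0)) with (1 / 1).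
    unfold picard_y, picard_p. cbn [picard_terms fst snd].
    pose proof (Rabs_pos y0). pose proof (Rabs_pos p0).
    rewrite Rdiv_1_r, Rmult_1_r. split; lra.
  - destruct (picard_terms_at_0 n) as [hy0 hp0].
    split.
    + apply (abs_le_pow_fact_succ (picard_y (S n)) a (picard_p n)); [exact hy0 | | exact haM |].
      * intros s. exact (proj1 (picard_terms_derive n s)).
      * intros s. exact (proj2 (IH s)).
    + apply (abs_le_pow_fact_succ (picard_p (S n)) c (picard_y n)); [exact hp0 | | exact hcM |].
      * intros s. exact (proj2 (picard_terms_derive n s)).
      * intros s. exact (proj1 (IH s)).
Qed.

Lemma linear_system_exists : exists y p : R -> R, y 0 = y0 /\ p 0 = p0 /\
  forall t, derivable_pt_lim y t (a t * p t) /\ derivable_pt_lim p t (c t * y t).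
Proof.
  assert (hM : 0 <= M) by (pose proof (haM 0); pose proof (Rabs_pos (a 0)); lra).
  assert (hK : 0 <= Rabs y0 + Rabs p0)
    by (pose proof (Rabs_pos y0); pose proof (Rabs_pos p0); lra).
  assert (Ny : CVN_R picard_y).
  { apply (CVN_R_of_exp_bound _ _ M hK hM). intros n t. exact (proj1 (picard_terms_bound n t)). }
  assert (Np : CVN_R picard_p).
  { apply (CVN_R_of_exp_bound _ _ M hK hM). intros n t. exact (proj2 (picard_terms_bound n t)). }
  exists (SFL picard_y (CVN_R_CVS _ Ny)), (SFL picard_p (CVN_R_CVS _ Np)).
  split; [| split].
  - rewrite SFL_of_vanishing_tail; [reflexivity |].
    intros n. exact (proj1 (picard_terms_at_0 n)).
  - rewrite SFL_of_vanishing_tail; [reflexivity |].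
    intros n. exact (proj2 (picard_terms_at_0 n)).
  - intros t. split.
    + apply (derivable_pt_lim_SFL picard_y picard_p a M); [exact ha | exact haM | | |].
      * intros n. exact (proj2 (picard_terms_continuous n)).
      * intros s. apply derivable_pt_lim_const.
      * intros n s. exact (proj1 (picard_terms_derive n s)).
    + apply (derivable_pt_lim_SFL picard_p picard_y c M); [exact hc | exact hcM | | |].
      * intros n. exact (proj1 (picard_terms_continuous n)).
      * intros s. apply derivable_pt_lim_const.
      * intros n s. exact (proj2 (picard_terms_derive n s)).
Qed.

End LinearSystem.

(** * Gronwall inequalities and zeros of continuous functions *)

Lemma exp_le_exp_of_le (x y : R) : x <= y -> exp x <= exp y.
Proof. intros [hlt | ->]; [left; apply exp_increasing, hlt | right; reflexivity]. Qed.

Lemma gronwall_forward (f f' : R -> R) (K C a b : R) : 0 <= K -> 0 <= C -> a <= b ->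
  (forall t, a <= t <= b -> derivable_pt_lim f t (f' t)) ->
  (forall t, a <= t <= b -> f' t <= K * f t + C) ->
  f b <= (f a + C * (b - a)) * exp (K * (b - a)).
Proof.
  intros hK hC hab hf hf'.
  assert (hexp : forall s, derivable_pt_lim (fun s => exp (- K * (s - a))) s
                   (- K * exp (- K * (s - a)))).
  { intros s. apply is_derive_Reals. auto_derive; [exact I | unfold Rminus; ring]. }
  assert (hg : C * (a - a) - f a * exp (- K * (a - a)) <= C * (b - a) - f b * exp (- K * (b - a))).
  { apply (le_of_deriv_nonneg (fun s => C * (s - a) - f s * exp (- K * (s - a)))
      (fun s => C - (f' s - K * f s) * exp (- K * (s - a)))); [exact hab | |].
    - intros s hs.
      replace (C - (f' s - K * f s) * exp (- K * (s - a)))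
        with (C * 1 - (f' s * exp (- K * (s - a)) + f s * (- K * exp (- K * (s - a)))))
        by ring.
      apply derivable_pt_lim_minus.
      + apply is_derive_Reals. auto_derive; [exact I | unfold Rminus; ring].
      + apply (derivable_pt_lim_mult f (fun s => exp (- K * (s - a))));
          [apply hf; exact hs | apply hexp].
    - intros s hs.
      assert (hle1 : exp (- K * (s - a)) <= 1)
        by (rewrite <- exp_0; apply exp_le_exp_of_le; nra).
      pose proof (exp_pos (- K * (s - a))). pose proof (hf' s hs). nra. }
  rewrite Rminus_diag, Rmult_0_r, Rmult_0_r, exp_0 in hg.
  replace (f b) with (f b * exp (- K * (b - a)) * exp (K * (b - a)))
    by (rewrite Rmult_assoc, <- exp_plus; replace (- K * (b - a) + K * (b - a)) with 0 by ring;
        rewrite exp_0; ring).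
  apply Rmult_le_compat_r; [apply Rlt_le, exp_pos | lra].
Qed.

Lemma gronwall_backward (f f' : R -> R) (K a b : R) : a <= b ->
  (forall t, a <= t <= b -> derivable_pt_lim f t (f' t)) ->
  (forall t, a <= t <= b -> - K * f t <= f' t) ->
  f a <= f b * exp (K * (b - a)).
Proof.
  intros hab hf hf'.
  assert (hg : f a * exp (K * (a - a)) <= f b * exp (K * (b - a))).
  { apply (le_of_deriv_nonneg (fun s => f s * exp (K * (s - a)))
      (fun s => f' s * exp (K * (s - a)) + f s * (K * exp (K * (s - a))))); [exact hab | |].
    - intros s hs. apply (derivable_pt_lim_mult f (fun s => exp (K * (s - a)))); [apply hf; exact hs |].
      apply is_derive_Reals. auto_derive; [exact I | unfold Rminus; ring].
    - intros s hs. pose proof (exp_pos (K * (s - a))). pose proof (hf' s hs). nra. }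
  rewrite Rminus_diag, Rmult_0_r, exp_0, Rmult_1_r in hg. exact hg.
Qed.

Lemma continuity_pt_pos_nbhd (f : R -> R) (x : R) : continuity_pt f x -> 0 < f x ->
  exists e, 0 < e /\ forall s, Rabs (s - x) < e -> 0 < f s.
Proof.
  intros hc hpos. destruct (hc (f x) hpos) as [e [he H]]. exists e. split; [exact he |].
  intros s hs. destruct (Req_dec s x) as [-> | hne]; [exact hpos |].
  assert (hdist : R_dist (f s) (f x) < f x) by (apply H; split; [split; [exact I | auto] | exact hs]).
  unfold R_dist in hdist. apply Rabs_def2 in hdist. lra.
Qed.

Lemma continuity_pt_neg_nbhd (f : R -> R) (x : R) : continuity_pt f x -> f x < 0 ->
  exists e, 0 < e /\ forall s, Rabs (s - x) < e -> f s < 0.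
Proof.
  intros hc hneg. destruct (continuity_pt_pos_nbhd (fun s => - f s) x) as [e [he H]].
  - apply continuity_pt_opp, hc.
  - lra.
  - exists e. split; [exact he |]. intros s hs. specialize (H s hs). cbv beta in H. lra.
Qed.

Lemma is_lub_lt_exists (P : R -> Prop) (c t : R) : is_lub P c -> t < c -> exists s, P s /\ t < s.
Proof.
  intros [_ hleast] htc. apply NNPP. intros hno.
  assert (c <= t); [| lra].
  apply hleast. intros s hs. apply Rnot_lt_le. intros hts. apply hno. exists s. auto.
Qed.

Lemma first_zero (f : R -> R) (a b : R) : a < b ->
  (forall t, a <= t <= b -> continuity_pt f t) -> 0 < f a -> f b <= 0 ->
  exists c, a < c <= b /\ f c = 0 /\ forall t, a <= t < c -> 0 < f t.
Proof.
  intros hab hcont hfa hfb.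
  set (P := fun s => a <= s <= b /\ forall t, a <= t <= s -> 0 < f t).
  assert (hPa : P a) by (split; [lra | intros t ht; replace t with a by lra; exact hfa]).
  assert (hbound : bound P) by (exists b; intros s [hs _]; lra).
  destruct (completeness P hbound (ex_intro _ a hPa)) as [c hc].
  assert (hac : a <= c) by (apply (proj1 hc), hPa).
  assert (hcb : c <= b) by (apply (proj2 hc); intros s [hs _]; lra).
  assert (hbelow : forall t, a <= t < c -> 0 < f t).
  { intros t ht. destruct (is_lub_lt_exists P c t hc (proj2 ht)) as [s [[_ hs] hts]].
    apply hs. lra. }
  assert (hfc : f c = 0).
  { destruct (Rtotal_order (f c) 0) as [hneg | [hzero | hpos]]; [exfalso | exact hzero | exfalso].
    - assert (hac' : a < c) by (destruct (Req_dec a c) as [<- | ]; lra).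
      destruct (continuity_pt_neg_nbhd f c (hcont c ltac:(lra)) hneg) as [e [he H]].
      assert (hs : a <= Rmax a (c - e / 2) < c) by (split; [apply Rmax_l | apply Rmax_lub_lt; lra]).
      pose proof (hbelow _ hs).
      assert (f (Rmax a (c - e / 2)) < 0); [| lra].
      apply H. pose proof (Rmax_r a (c - e / 2)). rewrite Rabs_left; lra.
    - assert (hcb' : c < b) by (destruct (Req_dec c b) as [-> | ]; lra).
      destruct (continuity_pt_pos_nbhd f c (hcont c ltac:(lra)) hpos) as [e [he H]].
      assert (hPs : P (Rmin (c + e / 2) b)).
      { split; [split; [apply Rmin_glb; lra | apply Rmin_r] |].
        intros t ht. destruct (Rlt_or_le t c); [apply hbelow; lra |].
        apply H. pose proof (Rmin_l (c + e / 2) b). rewrite Rabs_right; lra. }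
      pose proof (proj1 hc _ hPs).
      assert (c < Rmin (c + e / 2) b) by (apply Rmin_glb_lt; lra). lra. }
  exists c. split; [| split; [exact hfc | exact hbelow]].
  split; [| exact hcb]. destruct (Req_dec a c) as [<- | ]; lra.
Qed.

Lemma deriv_le_0_of_left_nonneg (f : R -> R) (x l e : R) :
  derivable_pt_lim f x l -> f x = 0 -> 0 < e ->
  (forall s, x - e < s < x -> 0 <= f s) -> l <= 0.
Proof.
  intros hd hfx he hleft. apply Rnot_lt_le. intros hl.
  destruct (hd l hl) as [delta hdelta].
  set (k := Rmin (delta / 2) (e / 2)).
  assert (hk : 0 < k) by (apply Rmin_glb_lt; pose proof (cond_pos delta); lra).
  assert (hkd : k < delta)
    by (pose proof (Rmin_l (delta / 2) (e / 2)); pose proof (cond_pos delta); unfold k; lra).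
  assert (hke : k <= e / 2) by apply Rmin_r.
  specialize (hdelta (- k) ltac:(lra) ltac:(rewrite Rabs_Ropp, Rabs_right; lra)).
  rewrite hfx, Rminus_0_r in hdelta.
  assert (hq : f (x + - k) / - k <= 0).
  { unfold Rdiv. rewrite Rinv_opp.
    pose proof (hleft (x + - k) ltac:(lra)). pose proof (Rinv_0_lt_compat k hk). nra. }
  apply Rabs_def2 in hdelta. lra.
Qed.

(** * The first-order shooting system *)

(* [p] stands for [w v']; with [w 0 = 1] the initial data [y 0 = 1], [p 0 = -1] encode
   [v(0) = 1] and the Robin condition [v'(0) = - v(0)]. *)
Definition weighted_system (d : R) (w V : R -> R) (E : R) (y p : R -> R) : Prop :=
  forall t, 0 <= t <= d ->
    derivable_pt_lim y t (p t / w t) /\ derivable_pt_lim p t (w t * (V t - E) * y t).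

Definition shooting_solution (d : R) (w V : R -> R) (E : R) (y p : R -> R) : Prop :=
  y 0 = 1 /\ p 0 = -1 /\ weighted_system d w V E y p.

Definition energy (y p : R -> R) (t : R) : R := y t * y t + p t * p t.

Lemma energy_nonneg y p t : 0 <= energy y p t.
Proof.
  unfold energy. pose proof (Rle_0_sqr (y t)). pose proof (Rle_0_sqr (p t)). unfold Rsqr in *. lra.
Qed.

Lemma weighted_system_continuous d w V E y p t :
  weighted_system d w V E y p -> 0 <= t <= d -> continuity_pt y t.
Proof.
  intros hsys ht. apply derivable_continuous_pt.
  exists (p t / w t). exact (proj1 (hsys t ht)).
Qed.

Lemma weighted_system_scale d w V E y p k :
  weighted_system d w V E y p -> weighted_system d w V E (fun t => k * y t) (fun t => k * p t).
Proof.
  intros hsys t ht. destruct (hsys t ht) as [hy hp]. split.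
  - replace (k * p t / w t) with (k * (p t / w t)) by (unfold Rdiv; ring).
    apply (derivable_pt_lim_scal y), hy.
  - replace (w t * (V t - E) * (k * y t)) with (k * (w t * (V t - E) * y t)) by ring.
    apply (derivable_pt_lim_scal p), hp.
Qed.

Lemma wronskian_derive d w V Vm E y p u q t :
  weighted_system d w V E y p -> weighted_system d w Vm E u q -> 0 <= t <= d -> w t <> 0 ->
  derivable_pt_lim (fun s => p s * u s - y s * q s) t (w t * y t * u t * (V t - Vm t)).
Proof.
  intros hyp huq ht hw. destruct (hyp t ht) as [hy hp]. destruct (huq t ht) as [hu hq].
  replace (w t * y t * u t * (V t - Vm t))
    with (w t * (V t - E) * y t * u t + p t * (q t / w t)
          - (p t / w t * q t + y t * (w t * (Vm t - E) * u t)))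
    by (field; exact hw).
  apply derivable_pt_lim_minus; apply derivable_pt_lim_mult; assumption.
Qed.

(* The Wronskian [p u - y q] vanishes at 0 and decreases strictly while [y, u > 0],
   yet it is [- y a * q a >= 0] at the first zero [a] of [u]. *)
Lemma sturm_comparison_first_zero d w V Vm E y p u q a :
  (forall t, 0 <= t <= d -> 0 < w t) -> (forall t, 0 <= t <= d -> V t < Vm t) ->
  shooting_solution d w V E y p -> shooting_solution d w Vm E u q ->
  0 < a <= d -> u a = 0 -> (forall t, 0 <= t < a -> 0 < u t) ->
  exists c, 0 < c < a /\ y c <= 0.
Proof.
  intros hw hV [hy0 [hp0 hyp]] [hu0 [hq0 huq]] ha hua hupos.
  apply NNPP. intros hno.
  assert (hypos : forall t, 0 < t < a -> 0 < y t).
  { intros t ht. apply Rnot_le_lt. intros hyt. apply hno. exists t. auto. }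
  assert (hya : 0 <= y a).
  { apply Rnot_lt_le. intros hneg.
    destruct (first_zero y 0 a) as [c [hc [hyc _]]]; [lra | | lra | lra |].
    { intros t ht. apply (weighted_system_continuous d w V E y p); [exact hyp | lra]. }
    apply hno. exists c. split; [| lra]. split; [lra |].
    destruct (Req_dec c a) as [-> | ]; lra. }
  assert (hqa : q a <= 0).
  { assert (hwa : 0 < w a) by (apply hw; lra).
    assert (q a / w a <= 0); [| apply Rmult_le_reg_r with (/ w a);
                                  [apply Rinv_0_lt_compat, hwa | unfold Rdiv in *; lra]].
    apply (deriv_le_0_of_left_nonneg u a _ a); [exact (proj1 (huq a ltac:(lra))) | exact hua | lra |].
    intros s hs. left. apply hupos. lra. }
  destruct (MVT_cor2 (fun s => p s * u s - y s * q s)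
              (fun s => w s * y s * u s * (V s - Vm s)) 0 a) as [xi [hW hxi]]; [lra | |].
  { intros s hs. apply (wronskian_derive d w V Vm E); [exact hyp | exact huq | lra |].
    pose proof (hw s ltac:(lra)). lra. }
  rewrite hua, hp0, hu0, hy0, hq0 in hW.
  assert (hprod : 0 < w xi * y xi * u xi).
  { apply Rmult_lt_0_compat; [apply Rmult_lt_0_compat |].
    - apply hw; lra.
    - apply hypos; lra.
    - apply hupos; lra. }
  assert (hrhs : w xi * y xi * u xi * (V xi - Vm xi) * (a - 0) < 0).
  { apply Rmult_neg_pos; [| lra]. apply Rmult_pos_neg; [exact hprod |].
    pose proof (hV xi ltac:(lra)). lra. }
  assert (hlhs : 0 <= - y a * q a) by nra.
  lra.
Qed.

Lemma sturm_comparison d w V Vm E y p u q a :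
  (forall t, 0 <= t <= d -> 0 < w t) -> (forall t, 0 <= t <= d -> V t < Vm t) ->
  shooting_solution d w V E y p -> shooting_solution d w Vm E u q ->
  0 < a <= d -> u a = 0 -> exists c, 0 < c < a /\ y c <= 0.
Proof.
  intros hw hV hy hu ha hua.
  pose proof hu as [hu0 [_ huq]].
  destruct (first_zero u 0 a) as [a' [ha' [hua' hpos]]]; [lra | | lra | lra |].
  { intros t ht. apply (weighted_system_continuous d w Vm E u q); [exact huq | lra]. }
  destruct (sturm_comparison_first_zero d w V Vm E y p u q a') as [c [hc hyc]];
    try assumption; [lra |].
  exists c. split; [lra | exact hyc].
Qed.

Definition clamp (d t : R) : R := Rmax 0 (Rmin t d).

Lemma clamp_id d t : 0 <= t <= d -> clamp d t = t.
Proof. intros ht. unfold clamp. rewrite Rmin_left, Rmax_right; lra. Qed.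

Lemma clamp_range d t : 0 <= d -> 0 <= clamp d t <= d.
Proof.
  intros hd. unfold clamp. split; [apply Rmax_l |].
  apply Rmax_lub; [exact hd | apply Rmin_r].
Qed.

Lemma clamp_continuous d : continuity (clamp d).
Proof.
  intros x eps heps. exists eps. split; [exact heps |]. intros y [_ hy].
  simpl in *. unfold R_dist in *. eapply Rle_lt_trans; [| exact hy].
  unfold clamp, Rmax, Rmin.
  repeat destruct Rle_dec; unfold Rabs; repeat destruct Rcase_abs; lra.
Qed.

Lemma two_mul_abs_le (x y k : R) : Rabs (2 * x * y * k) <= Rabs k * (x * x + y * y).
Proof.
  rewrite !Rabs_mult, (Rabs_right 2) by lra.
  assert (hxy : 2 * Rabs x * Rabs y <= x * x + y * y).
  { pose proof (Rsqr_abs x). pose proof (Rsqr_abs y).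
    pose proof (Rle_0_sqr (Rabs x - Rabs y)). unfold Rsqr in *. nra. }
  pose proof (Rabs_pos k). nra.
Qed.

Section Shooting.

Variables (d w0 Vmax : R) (w V : R -> R).
Hypotheses (hd : 0 < d) (hw0 : 0 < w0)
  (hw : forall t, 0 <= t <= d -> w0 <= w t <= 1)
  (hV : forall t, 0 <= t <= d -> 0 <= V t <= Vmax)
  (hwc : forall t, 0 <= t <= d -> continuity_pt w t)
  (hVc : forall t, 0 <= t <= d -> continuity_pt V t).

Local Notation system := (weighted_system d w V).
Local Notation solution := (shooting_solution d w V).

Lemma weight_pos t : 0 <= t <= d -> 0 < w t.
Proof. intros ht. pose proof (hw t ht). lra. Qed.

Lemma inv_weight_abs_le t : 0 <= t <= d -> Rabs (/ w t) <= / w0.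
Proof.
  intros ht. pose proof (hw t ht). pose proof (weight_pos t ht).
  rewrite Rabs_right by (apply Rle_ge, Rlt_le, Rinv_0_lt_compat; lra).
  apply Rinv_le_contravar; lra.
Qed.

Lemma weighted_potential_abs_le E t : 0 <= t <= d -> Rabs (w t * (V t - E)) <= Vmax + Rabs E.
Proof.
  intros ht. pose proof (hw t ht). pose proof (hV t ht).
  rewrite Rabs_mult, (Rabs_right (w t)) by lra.
  assert (Rabs (V t - E) <= Vmax + Rabs E).
  { eapply Rle_trans; [apply Rabs_triang |]. rewrite Rabs_Ropp, (Rabs_right (V t)) by lra. lra. }
  pose proof (Rabs_pos (V t - E)). nra.
Qed.

Lemma growth_rate_nonneg E : 0 <= / w0 + Vmax + Rabs E.
Proof.
  pose proof (hV 0 ltac:(lra)). pose proof (Rinv_0_lt_compat w0 hw0). pose proof (Rabs_pos E). lra.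
Qed.

Lemma energy_derive E y p t : system E y p -> 0 <= t <= d ->
  derivable_pt_lim (energy y p) t (2 * y t * p t * (/ w t + w t * (V t - E))).
Proof.
  intros hsys ht. destruct (hsys t ht) as [hy hp]. pose proof (weight_pos t ht).
  replace (2 * y t * p t * (/ w t + w t * (V t - E)))
    with (p t / w t * y t + y t * (p t / w t)
          + (w t * (V t - E) * y t * p t + p t * (w t * (V t - E) * y t)))
    by (field; lra).
  apply derivable_pt_lim_plus; apply derivable_pt_lim_mult; assumption.
Qed.

Lemma energy_derive_abs_le E y p t : 0 <= t <= d ->
  Rabs (2 * y t * p t * (/ w t + w t * (V t - E))) <= (/ w0 + Vmax + Rabs E) * energy y p t.
Proof.
  intros ht. eapply Rle_trans; [apply two_mul_abs_le |].
  apply Rmult_le_compat_r; [apply energy_nonneg |].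
  eapply Rle_trans; [apply Rabs_triang |].
  pose proof (inv_weight_abs_le t ht). pose proof (weighted_potential_abs_le E t ht). lra.
Qed.

Lemma system_vanishing_at E y p c : system E y p -> 0 <= c <= d -> y c = 0 -> p c = 0 ->
  forall t, 0 <= t <= d -> y t = 0 /\ p t = 0.
Proof.
  intros hsys hc hyc hpc t ht.
  set (K := / w0 + Vmax + Rabs E).
  assert (hK : 0 <= K) by apply growth_rate_nonneg.
  assert (he0 : energy y p c = 0) by (unfold energy; rewrite hyc, hpc; ring).
  pose proof (energy_nonneg y p t) as hpos.
  assert (hzero : energy y p t <= 0).
  { destruct (Rle_or_lt c t) as [hct | htc].
    - pose proof (gronwall_forward (energy y p) (fun s => 2 * y s * p s * (/ w s + w s * (V s - E)))
        K 0 c t hK (Rle_refl 0) hct) as G.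
      rewrite he0, Rmult_0_l, Rplus_0_r, Rmult_0_l in G. apply G.
      + intros s hs. apply energy_derive; [exact hsys | lra].
      + intros s hs. pose proof (energy_derive_abs_le E y p s ltac:(lra)) as hb.
        apply Rabs_le_between in hb. unfold K. lra.
    - pose proof (gronwall_backward (energy y p) (fun s => 2 * y s * p s * (/ w s + w s * (V s - E)))
        K t c ltac:(lra)) as G.
      rewrite he0, Rmult_0_l in G. apply G.
      + intros s hs. apply energy_derive; [exact hsys | lra].
      + intros s hs. pose proof (energy_derive_abs_le E y p s ltac:(lra)) as hb.
        apply Rabs_le_between in hb. unfold K. lra. }
  unfold energy in *. pose proof (Rle_0_sqr (y t)). pose proof (Rle_0_sqr (p t)). unfold Rsqr in *.
  split; nra.
Qed.

Lemma solution_energy_le E y p K : / w0 + Vmax + Rabs E <= K -> solution E y p ->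
  forall t, 0 <= t <= d -> energy y p t <= 2 * exp (K * d).
Proof.
  intros hK [hy0 [hp0 hsys]] t ht.
  assert (hK0 : 0 <= K) by (pose proof (growth_rate_nonneg E); lra).
  pose proof (gronwall_forward (energy y p) (fun s => 2 * y s * p s * (/ w s + w s * (V s - E)))
    K 0 0 t hK0 (Rle_refl 0) (proj1 ht)) as G.
  assert (he0 : energy y p 0 = 2) by (unfold energy; rewrite hy0, hp0; ring).
  rewrite he0, Rmult_0_l, Rplus_0_r, Rminus_0_r in G.
  eapply Rle_trans; [apply G |].
  - intros s hs. apply energy_derive; [exact hsys | lra].
  - intros s hs. rewrite Rplus_0_r. pose proof (energy_derive_abs_le E y p s ltac:(lra)) as hb.
    apply Rabs_le_between in hb. pose proof (energy_nonneg y p s). nra.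
  - apply Rmult_le_compat_l; [lra |]. apply exp_le_exp_of_le, Rmult_le_compat_l; lra.
Qed.

Lemma difference_energy_derive E1 E2 y1 p1 y2 p2 t :
  system E1 y1 p1 -> system E2 y2 p2 -> 0 <= t <= d ->
  derivable_pt_lim (energy (fun s => y1 s - y2 s) (fun s => p1 s - p2 s)) t
    (2 * (y1 t - y2 t) * (p1 t - p2 t) * (/ w t + w t * (V t - E1))
     + 2 * (p1 t - p2 t) * (w t * (E2 - E1) * y2 t)).
Proof.
  intros hs1 hs2 ht.
  destruct (hs1 t ht) as [hy1 hp1]. destruct (hs2 t ht) as [hy2 hp2].
  pose proof (weight_pos t ht). unfold energy.
  replace (2 * (y1 t - y2 t) * (p1 t - p2 t) * (/ w t + w t * (V t - E1))
           + 2 * (p1 t - p2 t) * (w t * (E2 - E1) * y2 t))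
    with ((p1 t / w t - p2 t / w t) * (y1 t - y2 t) + (y1 t - y2 t) * (p1 t / w t - p2 t / w t)
          + ((w t * (V t - E1) * y1 t - w t * (V t - E2) * y2 t) * (p1 t - p2 t)
             + (p1 t - p2 t) * (w t * (V t - E1) * y1 t - w t * (V t - E2) * y2 t)))
    by (field; lra).
  apply (derivable_pt_lim_plus (fun s => (y1 s - y2 s) * (y1 s - y2 s))
                               (fun s => (p1 s - p2 s) * (p1 s - p2 s)));
    [apply (derivable_pt_lim_mult (fun s => y1 s - y2 s) (fun s => y1 s - y2 s))
    | apply (derivable_pt_lim_mult (fun s => p1 s - p2 s) (fun s => p1 s - p2 s))];
    apply derivable_pt_lim_minus; assumption.
Qed.

Lemma difference_energy_derive_le E1 E2 x q Y K B t : 0 <= t <= d ->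
  / w0 + Vmax + Rabs E1 <= K -> Y * Y <= B ->
  2 * x * q * (/ w t + w t * (V t - E1)) + 2 * q * (w t * (E2 - E1) * Y)
  <= (K + 1) * (x * x + q * q) + (E1 - E2) * (E1 - E2) * B.
Proof.
  intros ht hK hB.
  pose proof (energy_derive_abs_le E1 (fun _ => x) (fun _ => q) t ht) as hb.
  apply Rabs_le_between in hb. unfold energy in hb.
  set (g := w t * (E2 - E1) * Y).
  assert (hg : 2 * q * g <= q * q + g * g).
  { pose proof (Rle_0_sqr (q - g)). unfold Rsqr in *. nra. }
  assert (hgg : g * g <= (E1 - E2) * (E1 - E2) * B).
  { pose proof (hw t ht) as [_ hw1]. pose proof (weight_pos t ht).
    pose proof (Rle_0_sqr (E1 - E2)). pose proof (Rle_0_sqr Y). unfold g, Rsqr in *.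
    replace (w t * (E2 - E1) * Y * (w t * (E2 - E1) * Y))
      with (w t * w t * ((E1 - E2) * (E1 - E2) * (Y * Y))) by ring.
    assert (w t * w t <= 1) by nra.
    assert (0 <= (E1 - E2) * (E1 - E2) * (Y * Y)) by nra. nra. }
  pose proof (Rle_0_sqr x). pose proof (Rle_0_sqr q). unfold Rsqr in *. nra.
Qed.

Lemma solution_lipschitz_in_energy R0 : exists L, 0 <= L /\
  forall E1 E2 y1 p1 y2 p2, Rabs E1 <= R0 -> Rabs E2 <= R0 ->
  solution E1 y1 p1 -> solution E2 y2 p2 ->
  forall t, 0 <= t <= d -> (y1 t - y2 t) * (y1 t - y2 t) <= L * ((E1 - E2) * (E1 - E2)).
Proof.
  set (K := / w0 + Vmax + R0).
  exists (2 * exp (K * d) * d * exp ((K + 1) * d)). split.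
  { pose proof (exp_pos (K * d)). pose proof (exp_pos ((K + 1) * d)).
    apply Rmult_le_pos; [apply Rmult_le_pos |]; lra. }
  intros E1 E2 y1 p1 y2 p2 hE1 hE2 hsol1 hsol2 t ht.
  pose proof hsol1 as [hy1 [hp1 hs1]]. pose proof hsol2 as [hy2 [hp2 hs2]].
  assert (hK : 0 <= K) by (pose proof (growth_rate_nonneg E1); unfold K; lra).
  set (C := (E1 - E2) * (E1 - E2) * (2 * exp (K * d))).
  assert (hC : 0 <= C).
  { pose proof (Rle_0_sqr (E1 - E2)). pose proof (exp_pos (K * d)). unfold C, Rsqr in *. nra. }
  pose proof (gronwall_forward (energy (fun s => y1 s - y2 s) (fun s => p1 s - p2 s))
    (fun s => 2 * (y1 s - y2 s) * (p1 s - p2 s) * (/ w s + w s * (V s - E1))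
              + 2 * (p1 s - p2 s) * (w s * (E2 - E1) * y2 s))
    (K + 1) C 0 t ltac:(lra) hC (proj1 ht)) as G.
  assert (he0 : energy (fun s => y1 s - y2 s) (fun s => p1 s - p2 s) 0 = 0)
    by (unfold energy; rewrite hy1, hy2, hp1, hp2; ring).
  rewrite he0, Rplus_0_l, Rminus_0_r in G.
  assert (hE : energy (fun s => y1 s - y2 s) (fun s => p1 s - p2 s) t <= C * t * exp ((K + 1) * t)).
  { apply G; intros s hs.
    - apply difference_energy_derive; [exact hs1 | exact hs2 | lra].
    - apply difference_energy_derive_le; [lra | unfold K; lra |].
      pose proof (solution_energy_le E2 y2 p2 K ltac:(unfold K; lra) hsol2 s ltac:(lra)).
      unfold energy in *. pose proof (Rle_0_sqr (p2 s)). unfold Rsqr in *. lra. }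
  assert (hexp : exp ((K + 1) * t) <= exp ((K + 1) * d))
    by (apply exp_le_exp_of_le, Rmult_le_compat_l; lra).
  assert (C * t * exp ((K + 1) * t) <= C * d * exp ((K + 1) * d)).
  { pose proof (exp_pos ((K + 1) * t)).
    apply Rmult_le_compat; [nra | lra | apply Rmult_le_compat_l; lra | exact hexp]. }
  unfold energy, C in *. pose proof (Rle_0_sqr (p1 t - p2 t)). unfold Rsqr in *. nra.
Qed.

Lemma solution_continuous_in_energy Es ys ps : solution Es ys ps ->
  forall eps, 0 < eps -> exists eta, 0 < eta /\
    forall E y p, Rabs (E - Es) < eta -> solution E y p ->
    forall t, 0 <= t <= d -> Rabs (y t - ys t) < eps.
Proof.
  intros hsol eps heps.
  destruct (solution_lipschitz_in_energy (Rabs Es + 1)) as [L [hL hlip]].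
  set (eta := Rmin 1 (eps / (L + 1))).
  assert (heta : 0 < eta) by (apply Rmin_glb_lt; [lra | apply Rdiv_lt_0_compat; lra]).
  assert (heta1 : eta <= 1) by apply Rmin_l.
  assert (hetaL : eta * (L + 1) <= eps).
  { apply (Rle_trans _ (eps / (L + 1) * (L + 1))); [| right; field; lra].
    apply Rmult_le_compat_r; [lra | apply Rmin_r]. }
  exists eta. split; [exact heta |].
  intros E y p hE hsolE t ht.
  assert (hEabs : Rabs E <= Rabs Es + 1).
  { replace E with (Es + (E - Es)) by ring.
    eapply Rle_trans; [apply Rabs_triang | lra]. }
  pose proof (hlip E Es y p ys ps hEabs ltac:(lra) hsolE hsol t ht) as hdiff.
  assert (hsq : (E - Es) * (E - Es) <= eta * eta).
  { pose proof (Rsqr_abs (E - Es)). pose proof (Rabs_pos (E - Es)). unfold Rsqr in *. nra. }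
  assert (hL2 : L * (eta * eta) < (eta * (L + 1)) * (eta * (L + 1))) by nra.
  assert (hx : (y t - ys t) * (y t - ys t) < eps * eps).
  { pose proof (Rmult_le_compat_l L _ _ hL hsq).
    assert ((eta * (L + 1)) * (eta * (L + 1)) <= eps * eps) by (apply Rmult_le_compat; nra).
    lra. }
  apply Rsqr_lt_abs_0 in hx. rewrite (Rabs_right eps) in hx by lra. exact hx.
Qed.

Lemma solution_exists E : exists y p, solution E y p.
Proof.
  set (a := fun t => / w (clamp d t)).
  set (c := fun t => w (clamp d t) * (V (clamp d t) - E)).
  assert (hcl : forall t, 0 <= clamp d t <= d) by (intros t; apply clamp_range; lra).
  assert (ha : continuity a).
  { intros t. apply (continuity_pt_comp (clamp d) (fun s => / w s)); [apply clamp_continuous |].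
    apply continuity_pt_inv; [apply hwc, hcl | apply Rgt_not_eq, weight_pos, hcl]. }
  assert (hc : continuity c).
  { intros t. apply (continuity_pt_comp (clamp d) (fun s => w s * (V s - E)));
      [apply clamp_continuous |].
    apply continuity_pt_mult; [apply hwc, hcl |].
    apply continuity_pt_minus; [apply hVc, hcl | apply continuity_pt_const; intros u v; reflexivity]. }
  assert (haM : forall t, Rabs (a t) <= / w0 + Vmax + Rabs E).
  { intros t. pose proof (inv_weight_abs_le _ (hcl t)). pose proof (hV _ (hcl t)).
    pose proof (Rabs_pos E). unfold a. lra. }
  assert (hcM : forall t, Rabs (c t) <= / w0 + Vmax + Rabs E).
  { intros t. pose proof (weighted_potential_abs_le E _ (hcl t)).
    pose proof (Rinv_0_lt_compat w0 hw0). unfold c. lra. }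
  destruct (linear_system_exists a c _ 1 (-1) ha hc haM hcM) as [y [p [hy0 [hp0 hyp]]]].
  exists y, p. split; [exact hy0 | split; [exact hp0 |]].
  intros t ht. destruct (hyp t) as [hy hp]. unfold a, c in hy, hp.
  rewrite clamp_id in hy, hp by exact ht. split; [| exact hp].
  replace (p t / w t) with (/ w t * p t) by (unfold Rdiv; ring). exact hy.
Qed.

(* [y p + y ^ 2] vanishes at 0 and at a first zero of [y], but its derivative
   [(p + y) ^ 2 / w + (w (V - E) - 1 / w) y ^ 2] is positive before it. *)
Lemma solution_pos_of_low_energy E y p : E < - / (w0 * w0) -> solution E y p ->
  forall t, 0 <= t <= d -> 0 < y t.
Proof.
  intros hE [hy0 [hp0 hsys]] t ht. apply Rnot_le_lt. intros hyt.
  assert (htpos : 0 < t) by (destruct (Req_dec t 0) as [-> | ]; lra).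
  destruct (first_zero y 0 t htpos) as [c [hc [hyc hpos]]]; [| lra | exact hyt |].
  { intros s hs. apply (weighted_system_continuous d w V E y p); [exact hsys | lra]. }
  destruct (MVT_cor2 (fun s => y s * p s + y s * y s)
              (fun s => (p s + y s) * (p s + y s) / w s + (w s * (V s - E) - / w s) * (y s * y s))
              0 c) as [xi [hPhi hxi]]; [lra | |].
  { intros s hs. destruct (hsys s ltac:(lra)) as [hy hp]. pose proof (weight_pos s ltac:(lra)).
    replace ((p s + y s) * (p s + y s) / w s + (w s * (V s - E) - / w s) * (y s * y s))
      with (p s / w s * p s + y s * (w s * (V s - E) * y s) + (p s / w s * y s + y s * (p s / w s)))
      by (field; lra).
    apply derivable_pt_lim_plus; apply derivable_pt_lim_mult; assumption. }
  rewrite hyc, hy0, hp0 in hPhi.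
  pose proof (hw xi ltac:(lra)) as [hw1 hw2]. pose proof (hV xi ltac:(lra)) as [hV1 _].
  assert (hyxi : 0 < y xi) by (apply hpos; lra).
  assert (hinv : / w xi <= / w0) by (apply Rinv_le_contravar; lra).
  assert (hlow : / w0 < w xi * (V xi - E)).
  { replace (/ w0) with (w0 * / (w0 * w0)) by (field; lra).
    assert (0 < / (w0 * w0)) by (apply Rinv_0_lt_compat; nra). nra. }
  assert (hsq : 0 <= (p xi + y xi) * (p xi + y xi) / w xi).
  { apply Rmult_le_pos; [apply Rle_0_sqr | apply Rlt_le, Rinv_0_lt_compat; lra]. }
  assert (0 < (w xi * (V xi - E) - / w xi) * (y xi * y xi)) by (apply Rmult_lt_0_compat; nra).
  nra.
Qed.

Lemma solution_no_interior_zero E y p t0 : solution E y p ->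
  (forall t, 0 <= t <= d -> 0 <= y t) -> 0 < t0 < d -> y t0 <> 0.
Proof.
  intros [hy0 [hp0 hsys]] hnn ht0 hyt0.
  destruct (hsys t0 ltac:(lra)) as [hy _].
  assert (hmin : derive_pt y t0 (exist _ _ hy) = 0).
  { apply (deriv_minimum y 0 d); [lra | lra |]. intros x hx1 hx2. rewrite hyt0. apply hnn. lra. }
  rewrite (derive_pt_eq_0 _ _ _ _ hy) in hmin.
  assert (hpt0 : p t0 = 0).
  { pose proof (weight_pos t0 ltac:(lra)).
    replace (p t0) with (p t0 / w t0 * w t0) by (field; lra). rewrite hmin. ring. }
  destruct (system_vanishing_at E y p t0 hsys ltac:(lra) hyt0 hpt0 0 ltac:(lra)) as [h _]. lra.
Qed.

Definition positive_below (E : R) : Prop :=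
  forall E' y p, E' <= E -> solution E' y p -> forall t, 0 <= t <= d -> 0 < y t.

Lemma limit_solution_nonneg Es ys ps :
  (forall E, E < Es -> positive_below E) -> solution Es ys ps ->
  forall t, 0 <= t <= d -> 0 <= ys t.
Proof.
  intros hbelow hsol t ht. apply Rnot_lt_le. intros hneg.
  destruct (solution_continuous_in_energy Es ys ps hsol (- ys t) ltac:(lra)) as [eta [heta hclose]].
  destruct (solution_exists (Es - eta / 2)) as [y [p hsolE]].
  pose proof (hbelow (Es - eta / 2) ltac:(lra) _ y p (Rle_refl _) hsolE t ht) as hpos.
  pose proof (hclose (Es - eta / 2) y p ltac:(rewrite Rabs_left; lra) hsolE t ht) as hdist.
  apply Rabs_def2 in hdist. lra.
Qed.

Lemma limit_solution_not_positive Es ys ps :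
  (forall E, E < Es -> positive_below E) -> (forall eta, 0 < eta -> ~ positive_below (Es + eta)) ->
  solution Es ys ps -> exists t, 0 <= t <= d /\ ys t <= 0.
Proof.
  intros hbelow habove hsol. apply NNPP. intros hno.
  assert (hpos : forall t, 0 <= t <= d -> 0 < ys t).
  { intros t ht. apply Rnot_le_lt. intros hyt. apply hno. exists t. auto. }
  destruct (continuity_ab_min ys 0 d) as [tm [htm htm_range]]; [lra | |].
  { intros t ht. apply (weighted_system_continuous d w V Es ys ps); [apply hsol | exact ht]. }
  destruct (solution_continuous_in_energy Es ys ps hsol (ys tm) (hpos tm htm_range))
    as [eta [heta hclose]].
  apply (habove (eta / 2)); [lra |].
  intros E y p hE hsolE t ht.
  destruct (Rlt_or_le E Es) as [hlt | hge].
  - exact (hbelow E hlt E y p (Rle_refl E) hsolE t ht).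
  - pose proof (hclose E y p ltac:(rewrite Rabs_right; lra) hsolE t ht) as hdist.
    apply Rabs_def2 in hdist. pose proof (htm t ht). lra.
Qed.

Theorem shooting_eigenvalue_below lam :
  (forall y p, solution lam y p -> exists c, 0 < c < d /\ y c <= 0) ->
  exists E y p, E < lam /\ solution E y p /\ y d = 0.
Proof.
  intros hlam.
  assert (hdown : forall E' E, E' <= E -> positive_below E -> positive_below E').
  { intros E' E hE' hE E'' y p hE'' hsol. apply (hE E'' y p); [lra | exact hsol]. }
  assert (hub : forall E, positive_below E -> E <= lam).
  { intros E hE. apply Rnot_lt_le. intros hlt.
    destruct (solution_exists lam) as [y [p hsol]].
    destruct (hlam y p hsol) as [c [hc hyc]].
    pose proof (hE lam y p (Rlt_le _ _ hlt) hsol c ltac:(lra)). lra. }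
  assert (Hb : bound positive_below) by (exists lam; exact hub).
  assert (He : exists E, positive_below E).
  { exists (- / (w0 * w0) - 1). intros E y p hE hsol.
    apply (solution_pos_of_low_energy E y p); [lra | exact hsol]. }
  set (Es := proj1_sig (completeness _ Hb He)).
  assert (hlub : is_lub positive_below Es) by exact (proj2_sig (completeness _ Hb He)).
  assert (hbelow : forall E, E < Es -> positive_below E)
    by (intros E hE; apply NNPP, (completeness_any _ hdown He Hb), hE).
  assert (habove : forall eta, 0 < eta -> ~ positive_below (Es + eta))
    by (intros eta heta hpos; pose proof (proj1 hlub _ hpos); lra).
  assert (hEs : Es <= lam) by (apply (proj2 hlub); exact hub).
  destruct (solution_exists Es) as [ys [ps hsol]].
  pose proof (limit_solution_nonneg Es ys ps hbelow hsol) as hnn.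
  assert (hinterior : forall t, 0 < t < d -> ys t <> 0)
    by (intros t ht; exact (solution_no_interior_zero Es ys ps t hsol hnn ht)).
  destruct (limit_solution_not_positive Es ys ps hbelow habove hsol) as [t0 [ht0 hyt0]].
  exists Es, ys, ps. split; [| split; [exact hsol |]].
  - destruct hEs as [hlt | heq]; [exact hlt | exfalso].
    rewrite heq in hsol. destruct (hlam ys ps hsol) as [c [hc hyc]].
    apply (hinterior c hc). pose proof (hnn c ltac:(lra)). lra.
  - destruct (Req_dec t0 d) as [<- | hne]; [pose proof (hnn t0 ht0); lra | exfalso].
    destruct (Req_dec t0 0) as [-> | hne0]; [destruct hsol as [hy0 _]; lra |].
    apply (hinterior t0); [lra | pose proof (hnn t0 ht0); lra].
Qed.

End Shooting.

(** * The operators H^{b,rho}_{m,h} *)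

Lemma delta_pos rho h : 0 < h -> 0 < delta rho h.
Proof. intros hh. unfold delta, Rpower. apply exp_pos. Qed.

Lemma wgt_delta rho h : 0 < h -> wgt h (delta rho h) = 1 - Rpower h rho.
Proof.
  intros hh. unfold wgt, delta.
  rewrite <- (Rpower_sqrt h), <- Rpower_plus by exact hh.
  replace (/ 2 + (rho - 1 / 2)) with rho by field. reflexivity.
Qed.

Lemma wgt_delta_pos rho h : 0 < rho -> 0 < h < 1 -> 0 < wgt h (delta rho h).
Proof.
  intros hrho hh. rewrite wgt_delta by lra. unfold Rpower.
  assert (ln h < 0) by (rewrite <- ln_1; apply ln_increasing; lra).
  assert (exp (rho * ln h) < 1) by (rewrite <- exp_0; apply exp_increasing; nra).
  lra.
Qed.

Lemma wgt_bounds rho h t : 0 < h -> 0 <= t <= delta rho h ->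
  wgt h (delta rho h) <= wgt h t <= 1.
Proof. intros hh ht. pose proof (sqrt_lt_R0 h hh). unfold wgt. split; nra. Qed.

Lemma wgt_derive h t : derivable_pt_lim (wgt h) t (- sqrt h).
Proof. apply is_derive_Reals. unfold wgt. auto_derive; [exact I | ring]. Qed.

Lemma wgt_continuous h t : continuity_pt (wgt h) t.
Proof. apply derivable_continuous_pt. exists (- sqrt h). apply wgt_derive. Qed.

Lemma pot_continuous b h l t : wgt h t <> 0 -> continuity_pt (pot b h l) t.
Proof.
  intros hw. apply continuity_pt_filterlim.
  apply (ex_derive_continuous (K := R_AbsRing) (V := R_NormedModule) (pot b h l) t).
  unfold pot, wgt in *. auto_derive. rewrite Rmult_1_r.
  apply Rmult_integral_contrapositive_currified; exact hw.
Qed.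

Lemma pot_bounds b h l w0 t : 0 <= b -> 0 <= h -> 0 < w0 -> w0 <= wgt h t <= 1 ->
  0 <= pot b h l t <= h / (w0 * w0) * ((Rabs (IZR l) + b / 2) * (Rabs (IZR l) + b / 2)).
Proof.
  intros hb hh hw0 [hw1 hw2]. unfold pot. set (x := wgt h t) in *.
  assert (hx2 : 0 < x ^ 2) by (apply pow_lt; lra).
  assert (hcoef : 0 <= h / x ^ 2) by (apply Rmult_le_pos; [lra | apply Rlt_le, Rinv_0_lt_compat, hx2]).
  assert (hsq : 0 <= (IZR l - b / 2 * x ^ 2) ^ 2) by apply pow2_ge_0.
  split; [apply Rmult_le_pos; assumption |].
  apply Rmult_le_compat; [exact hcoef | exact hsq | |].
  - apply Rmult_le_compat_l; [exact hh |]. apply Rinv_le_contravar; [nra | simpl; nra].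
  - assert (habs : Rabs (IZR l - b / 2 * x ^ 2) <= Rabs (IZR l) + b / 2).
    { eapply Rle_trans; [apply Rabs_triang |]. rewrite Rabs_Ropp, (Rabs_right (b / 2 * x ^ 2)) by nra.
      assert (x ^ 2 <= 1) by (simpl; nra). nra. }
    rewrite <- (pow2_abs (IZR l - b / 2 * x ^ 2)).
    pose proof (Rabs_pos (IZR l - b / 2 * x ^ 2)).
    replace (Rabs (IZR l - b / 2 * x ^ 2) ^ 2)
      with (Rabs (IZR l - b / 2 * x ^ 2) * Rabs (IZR l - b / 2 * x ^ 2)) by ring.
    apply Rmult_le_compat; assumption.
Qed.

Lemma exists_lower_potential b h m : 0 <= b -> 0 < h ->
  (m <= -1)%Z \/ b < 2 * IZR m - 1 ->
  exists l, forall t, 0 < wgt h t <= 1 -> pot b h l t < pot b h m t.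
Proof.
  intros hb hh hm.
  assert (hlt : forall l : Z,
            (forall x, 0 < x <= 1 -> (IZR l - b / 2 * x) ^ 2 < (IZR m - b / 2 * x) ^ 2) ->
            forall t, 0 < wgt h t <= 1 -> pot b h l t < pot b h m t).
  { intros l hl t ht. unfold pot. apply Rmult_lt_compat_l.
    - apply Rdiv_lt_0_compat; [exact hh | apply pow_lt; lra].
    - apply hl. split; [apply pow_lt; lra | simpl; nra]. }
  destruct hm as [hneg | hpos].
  - exists (m + 1)%Z. apply hlt. intros x hx. rewrite plus_IZR.
    apply IZR_le in hneg. nra.
  - exists (m - 1)%Z. apply hlt. intros x hx. rewrite minus_IZR. nra.
Qed.

Lemma lower_potential_condition b m : 0 < b -> Rabs (IZR m) > (1 + sqrt 2) * b / 2 ->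
  (m <= -1)%Z \/ b < 2 * IZR m - 1.
Proof.
  intros hb hm.
  assert (hs2 : 1 <= sqrt 2) by (rewrite <- sqrt_1; apply sqrt_le_1_alt; lra).
  destruct (Z_lt_le_dec m 0) as [hneg | hnn]; [left; lia | right].
  destruct (Z.eq_dec m 0) as [-> | hnz]; [rewrite Rabs_R0 in hm; nra |].
  assert (h1 : 1 <= IZR m) by (apply IZR_le; lia).
  rewrite Rabs_right in hm by lra. nra.
Qed.

Lemma eigenfunction_system b rho h m lam v v1 v2 :
  (forall t, 0 <= t <= delta rho h -> 0 < wgt h t) ->
  (forall t, 0 <= t <= delta rho h ->
     derivable_pt_lim v t (v1 t) /\ derivable_pt_lim v1 t (v2 t) /\
     - (wgt h t * v2 t - sqrt h * v1 t) / wgt h t + pot b h m t * v t = lam * v t) ->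
  weighted_system (delta rho h) (wgt h) (pot b h m) lam v (fun t => wgt h t * v1 t).
Proof.
  intros hw hv t ht. destruct (hv t ht) as [hv1 [hv2 heq]]. pose proof (hw t ht). split.
  - replace (wgt h t * v1 t / wgt h t) with (v1 t) by (field; lra). exact hv1.
  - replace (wgt h t * (pot b h m t - lam) * v t) with (- sqrt h * v1 t + wgt h t * v2 t).
    + apply (derivable_pt_lim_mult (wgt h) v1); [apply wgt_derive | exact hv2].
    + assert (hq : (wgt h t * v2 t - sqrt h * v1 t) / wgt h t = pot b h m t * v t - lam * v t)
        by (rewrite <- heq; unfold Rdiv; ring).
      replace (- sqrt h * v1 t + wgt h t * v2 t)
        with (wgt h t * ((wgt h t * v2 t - sqrt h * v1 t) / wgt h t)) by (field; lra).
      rewrite hq. ring.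
Qed.

Lemma wgt_pos rho h t : 0 < rho -> 0 < h < 1 -> 0 <= t <= delta rho h -> 0 < wgt h t.
Proof.
  intros hrho hh ht. pose proof (wgt_delta_pos rho h hrho hh).
  pose proof (wgt_bounds rho h t (proj1 hh) ht). lra.
Qed.

Lemma eigenvalue_shooting_solution b rho h m lam : 0 <= b -> 0 < rho -> 0 < h < 1 ->
  is_eigenvalue b rho h m lam ->
  exists u q, shooting_solution (delta rho h) (wgt h) (pot b h m) lam u q /\ u (delta rho h) = 0.
Proof.
  intros hb hrho hh [v [v1 [v2 [hv [hv10 [hvd [t1 [ht1 hvt1]]]]]]]].
  pose proof (wgt_delta_pos rho h hrho hh) as hw0.
  pose proof (fun t => wgt_bounds rho h t (proj1 hh)) as hw.
  pose proof (eigenfunction_system b rho h m lam v v1 v2 (fun t => wgt_pos rho h t hrho hh) hv) as hsys.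
  assert (hw00 : wgt h 0 = 1) by (unfold wgt; ring).
  assert (hv0 : v 0 <> 0).
  { intros hv0. apply hvt1.
    refine (proj1 (system_vanishing_at _ _ _ _ _ (delta_pos rho h (proj1 hh)) hw0 hw
      (fun t ht => pot_bounds b h m _ t hb (Rlt_le _ _ (proj1 hh)) hw0 (hw t ht))
      lam v _ 0 hsys _ hv0 _ t1 ht1)).
    - pose proof (delta_pos rho h (proj1 hh)). lra.
    - rewrite hw00, hv10, hv0. ring. }
  exists (fun t => / v 0 * v t), (fun t => / v 0 * (wgt h t * v1 t)). split.
  - split; [field; exact hv0 |]. split; [rewrite hw00, hv10; field; exact hv0 |].
    apply weighted_system_scale, hsys.
  - rewrite hvd. ring.
Qed.

Lemma shooting_solution_eigenvalue b rho h l E y p : 0 < rho -> 0 < h < 1 ->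
  shooting_solution (delta rho h) (wgt h) (pot b h l) E y p -> y (delta rho h) = 0 ->
  is_eigenvalue b rho h l E.
Proof.
  intros hrho hh [hy0 [hp0 hsys]] hyd.
  exists y, (fun t => p t / wgt h t),
    (fun t => (wgt h t * (pot b h l t - E) * y t * wgt h t - - sqrt h * p t) / (wgt h t)²).
  split; [| split; [| split]].
  - intros t ht. destruct (hsys t ht) as [hy hp]. pose proof (wgt_pos rho h t hrho hh ht).
    split; [exact hy | split].
    + apply (derivable_pt_lim_div p (wgt h)); [exact hp | apply wgt_derive | lra].
    + unfold Rsqr. field. lra.
  - unfold wgt. rewrite hp0, hy0, Rmult_0_r, Rminus_0_r. field.
  - exact hyd.
  - exists 0. pose proof (delta_pos rho h (proj1 hh)). split; [lra | rewrite hy0; lra].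
Qed.

Lemma eigenvalue_below_of_sign_change b rho h l lam : 0 <= b -> 0 < rho -> 0 < h < 1 ->
  (forall y p, shooting_solution (delta rho h) (wgt h) (pot b h l) lam y p ->
     exists c, 0 < c < delta rho h /\ y c <= 0) ->
  exists E, E < lam /\ is_eigenvalue b rho h l E.
Proof.
  intros hb hrho hh hsign.
  pose proof (wgt_delta_pos rho h hrho hh) as hw0.
  pose proof (fun t => wgt_bounds rho h t (proj1 hh)) as hw.
  destruct (shooting_eigenvalue_below (delta rho h) _ _ (wgt h) (pot b h l)
              (delta_pos rho h (proj1 hh)) hw0 hw
              (fun t ht => pot_bounds b h l _ t hb (Rlt_le _ _ (proj1 hh)) hw0 (hw t ht))
              (fun t _ => wgt_continuous h t)
              (fun t ht => pot_continuous b h l t (Rgt_not_eq _ _ (wgt_pos rho h t hrho hh ht)))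
              lam hsign) as [E [y [p [hE [hy hyd]]]]].
  exists E. split; [exact hE |]. exact (shooting_solution_eigenvalue b rho h l E y p hrho hh hy hyd).
Qed.

Theorem proposition2p6 (b rho h : R) (m : Z) (Lam : Z -> R) (g : R)
  (hb : 0 < b) (hrho : 1/4 < rho < 1/2) (hh : 0 < h < 1)
  (hLam : forall l : Z, is_lambda1 b rho h l (Lam l))
  (hg : is_glb (fun x => exists l : Z, x = Lam l) g)
  (hm : Rabs (IZR m) > (1 + sqrt 2) * b / 2) :
  Lam m > g.
Proof.
  assert (hrho0 : 0 < rho) by lra.
  destruct (exists_lower_potential b h m (Rlt_le _ _ hb) (proj1 hh)
              (lower_potential_condition b m hb hm)) as [l hl].
  destruct (eigenvalue_shooting_solution b rho h m (Lam m) (Rlt_le _ _ hb) hrho0 hh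
              (proj1 (hLam m))) as [u [q [hu hud]]].
  destruct (eigenvalue_below_of_sign_change b rho h l (Lam m) (Rlt_le _ _ hb) hrho0 hh)
    as [E [hE hEig]].
  { intros y p hy.
    apply (sturm_comparison (delta rho h) (wgt h) (pot b h l) (pot b h m) (Lam m) y p u q);
      try assumption.
    - intros t ht. exact (wgt_pos rho h t hrho0 hh ht).
    - intros t ht. apply hl. pose proof (wgt_pos rho h t hrho0 hh ht).
      pose proof (wgt_bounds rho h t (proj1 hh) ht). lra.
    - pose proof (delta_pos rho h (proj1 hh)). lra. }
  pose proof (proj2 (hLam l) E hEig).
  pose proof (proj1 hg (Lam l) (ex_intro _ l eq_refl)).
  lra.
Qed.
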